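(* Let $X_1,X_2,\dots$ be iid random variables with a light right tail, $S_k=X_1+\dots+X_k$, and let $Y$ be independent of $(X_k)$ and satisfy condition $(\mathrm{P})$ with constant $a>0$. In case (ii) of the light-tail definition (i.e. $X_1\le A$ a.s. and $P(X_1>\alpha)>0$) assume additionally $a\le\alpha$. Then for every $k\ge1$, $$\lim_{u\to\infty}\frac{P(Y+S_k>u)}{P(Y+S_{k+1}>u)}=0.$$
   Context: A random variable $X$ has a light right tail if either (i) $P(X>u)>0$ for all $u>0$ and $\lim_{u\to\infty}P(X_1>u)/P(X_1+X_2>u)=0$, where $X_1,X_2$ are independent copies of $X$; or (ii) there are constants $A>0,\alpha>0$ with $X\le A$ a.s. and $P(X>\alpha)>0$. A random variable $Y$ satisfies condition $(\mathrm{P})$ with constant $a>0$ if $P(Y>u)>0$ for all $u>0$ and $\lim_{u\to\infty}P(Y>u+a)/P(Y>u)=0$. *)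

From HB Require Import structures.
From mathcomp Require Import all_boot all_order all_algebra.
From mathcomp Require Import all_classical all_reals all_analysis.
Set Implicit Arguments. Unset Strict Implicit. Unset Printing Implicit Defensive.
Import Order.TTheory GRing.Theory Num.Theory.
Import numFieldNormedType.Exports.
Local Open Scope classical_set_scope.
Local Open Scope ring_scope.

Definition prob d (T : measurableType d) (R : realType) (P : probability T R)
  (A : set T) : R := fine (P A).

Definition mutually_independent d (T : measurableType d) (R : realType)
  (P : probability T R) (I : eqType) (Z : I -> T -> R) : Prop :=
  forall (J : seq I) (B : I -> set R),
    uniq J -> (forall j, measurable (B j)) ->
    prob P (\bigcap_(j in [set` J]) (Z j @^-1` B j)) =
    \prod_(j <- J) prob P (Z j @^-1` B j).

Definition law d (T : measurableType d) (R : realType) (P : probability T R)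
  (X : {RV P >-> R}) := distribution P X.
Arguments law {d T R} P X.

(* P(X1 + X2 > u) for X1, X2 independent copies of X, computed on the product
   of the law of X with itself. *)
Definition tail_sum2 d (T : measurableType d) (R : realType)
  (P : probability T R) (X : {RV P >-> R}) (u : R) : R :=
  fine ((law P X \x law P X) [set xy : R * R | u < xy.1 + xy.2]).
Arguments tail_sum2 {d T R} P X u.

Definition light_tail_i d (T : measurableType d) (R : realType)
  (P : probability T R) (X : {RV P >-> R}) : Prop :=
  (forall u : R, 0 < u -> 0 < prob P [set t | u < X t]) /\
  (prob P [set t | u < X t] / tail_sum2 P X u) @[u --> +oo] --> 0.

Definition light_tail_ii d (T : measurableType d) (R : realType)
  (P : probability T R) (X : T -> R) (A alpha : R) : Prop :=
  0 < A /\ 0 < alpha /\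
  P.-negligible [set t | A < X t] /\ 0 < prob P [set t | alpha < X t].

Definition condP d (T : measurableType d) (R : realType)
  (P : probability T R) (Y : T -> R) (a : R) : Prop :=
  0 < a /\
  (forall u : R, 0 < u -> 0 < prob P [set t | u < Y t]) /\
  (prob P [set t | u + a < Y t] / prob P [set t | u < Y t]) @[u --> +oo] --> 0.

Definition join_family (T R : Type) (Y : T -> R) (X : nat -> T -> R)
  : option nat -> T -> R :=
  fun o => match o with None => Y | Some i => X i end.

(* S_k = X_1 + ... + X_k, with X_1 = X 0 (0-based indexing). *)
Definition partial_sum (T : Type) (R : realType) (X : nat -> T -> R) (k : nat)
  (t : T) : R := \sum_(i < k) X i t.

From HB Require Import structures.
From mathcomp Require Import all_boot all_order all_algebra.
From mathcomp Require Import all_classical all_reals all_analysis.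
From mathcomp Require Import measurable_realfun.
From mathcomp Require Import lra.
Import Order.TTheory GRing.Theory Num.Theory.
Import numFieldNormedType.Exports.
Set Implicit Arguments. Unset Strict Implicit.
Local Open Scope classical_set_scope.
Local Open Scope ring_scope.

(* Write [T_j(w) = P(Y + S_j > w)] and [F(c) = P(X_1 > c)].  Independence of the
   summands gives two inequalities:
   - [T_j(w - c) F(c) <= T_(j+1)(w)], as [Y + S_j > w - c] and [X_(j+1) > c] are
     independent events that together force [Y + S_(j+1) > w];
   - conditioning on [Y + S_j]: if [F(y) <= eps P(X_1 + X_2 > y)] for [y >= v],
     then [T_(j+1)(w) <= eps T_(j+2)(w) + T_j(w - v)].
   In case (ii), [S_k <= k A] almost surely, and condition (P) with [a <= alpha]
   gives [P(Y > y) <= eps F(alpha) P(Y + alpha > y)] for large [y]; conditioning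
   on [S_k] and the first inequality yield [T_k(u) <= eps T_(k+1)(u)].
   In case (i), induction on [j] shows [T_j(u - c) = o(T_(j+2)(u))] for every
   fixed [c]: the base case combines condition (P) with the first inequality
   applied twice, the induction step uses the second one.  A last use of the
   second inequality gives [T_k = o(T_(k+1))]. *)

Section Probability.
Context d (T : measurableType d) (R : realType) (P : probability T R).

Lemma probE (A : set T) : measurable A -> P A = (prob P A)%:E.
Proof.
move=> mA; rewrite /prob fineK // ge0_fin_numE ?measure_ge0 //.
exact: (le_lt_trans (probability_le1 P mA) (ltry _)).
Qed.

Lemma prob_ge0 (A : set T) : 0 <= prob P A.
Proof. by rewrite /prob fine_ge0 // measure_ge0. Qed.

Lemma le_prob (A B : set T) :
  measurable A -> measurable B -> A `<=` B -> prob P A <= prob P B.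
Proof.
move=> mA mB AB; rewrite -lee_fin -!probE //.
by apply: le_measure => //; rewrite inE.
Qed.

Lemma negligible_prob0 (A : set T) : measurable A -> P.-negligible A -> prob P A = 0.
Proof.
move=> mA [N [mN PN AN]]; apply/eqP; rewrite eq_le prob_ge0 andbT.
have : (P A <= 0)%E by rewrite -PN; apply: le_measure AN; rewrite inE.
by rewrite probE // lee_fin.
Qed.

Lemma measurable_fun_gt (h : T -> R) (c : R) :
  measurable_fun setT h -> measurable [set t | c < h t].
Proof.
move=> mh; have := mh measurableT _ (measurable_itv `]c, +oo[).
by rewrite setTI; congr measurable; apply/seteqP; split => t /=;
  rewrite in_itv /= andbT.
Qed.

Local Open Scope ereal_scope.

(* The pi-lambda theorem, applied to the class of events independent of [H]. *)
Lemma dynkin_indep (G : set (set T)) (H : set T) :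
  setI_closed G -> measurable H ->
  (forall E, G E -> measurable E /\ P (E `&` H) = P E * P H) ->
  forall E, <<s G >> E -> P (E `&` H) = P E * P H.
Proof.
move=> GI mH GH E sE.
pose T' := g_sigma_algebraType G.
suff : measurable (E : set T) /\ P (E `&` H) = P E * P H by case.
apply: (@dynkin_induction _ T' G
  (fun E : set T' => measurable (E : set T) /\ P (E `&` H) = P E * P H)) => //.
- by split; [exact: measurableT|rewrite setTI probability_setT mul1e].
- move=> S _ [mS eS]; split; first exact: measurableC.
  have hD : P (H `\` S) = P H - P (H `&` S).
    by rewrite measureD // (le_lt_trans (probability_le1 P mH) (ltry _)).
  rewrite probability_setC // setIC -setDE hD setIC eS (probE mS) (probE mH).
  by rewrite -!EFinM -!EFinB mulrBl mul1r.
- move=> F mF tF QF; have mF' n : measurable (F n : set T) by have [] := QF n.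
  split; first exact: bigcupT_measurable.
  rewrite setI_bigcupl (measure_bigcup P setT (fun n => F n `&` H)); last 2 first.
  - by move=> n _; apply: measurableI.
  - exact: trivIset_setIr.
  rewrite (measure_bigcup P setT F) // (probE mH) muleC -nneseriesZl //.
  apply: eq_eseriesr => n _ /=; have [_ ->] := QF n.
  by rewrite (probE mH) muleC.
Qed.

End Probability.

Lemma measurable_sum_gt (R : realType) (w : R) :
  measurable [set p : R * R | w < p.1 + p.2].
Proof. by apply: measurable_fun_gt; apply: measurable_funD. Qed.

Lemma partial_sum0 (T : Type) (R : realType) (X : nat -> T -> R) t :
  partial_sum X 0 t = 0.
Proof. by rewrite /partial_sum big_ord0. Qed.

Lemma partial_sumS (T : Type) (R : realType) (X : nat -> T -> R) j t :
  partial_sum X j.+1 t = partial_sum X j t + X j t.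
Proof. by rewrite /partial_sum big_ord_recr. Qed.

Section Independence.
Context d (T : measurableType d) (R : realType) (P : probability T R).
Context (I : choiceType) (Z : I -> T -> R).
Hypothesis mZ : forall i, measurable_fun setT (Z i).
Hypothesis Z_indep : mutually_independent P Z.

(* Events determined by finitely many coordinates [Z j] with [j] in [J]; they
   form a pi-system generating the sigma-algebra of the subfamily indexed by [J]. *)
Definition cylinders (J : set I) : set (set T) :=
  [set E | exists (s : seq I) (B : I -> set R),
     [/\ uniq s, (forall j, j \in s -> J j), (forall j, measurable (B j)) &
      E = \bigcap_(j in [set` s]) (Z j @^-1` B j)]].

Definition cylinder_sigma (J : set I) := <<s cylinders J >>.

Lemma measurable_cylinder J E : cylinders J E -> measurable E.
Proof.
move=> [s [B [_ _ mB ->]]]; rewrite bigcap_seq; apply: bigsetI_measurable => j _.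
by rewrite -[X in measurable X]setTI; apply: mZ.
Qed.

Lemma setI_closed_cylinders J : setI_closed (cylinders J).
Proof.
move=> E1 E2 [s1 [B1 [u1 s1J m1 ->]]] [s2 [B2 [u2 s2J m2 ->]]].
exists (s1 ++ [seq j <- s2 | j \notin s1]).
exists (fun j => (if j \in s1 then B1 j else setT) `&` (if j \in s2 then B2 j else setT)).
split.
- rewrite cat_uniq u1 filter_uniq // andbT; apply/hasPn => j.
  by rewrite mem_filter => /andP[].
- by move=> j; rewrite mem_cat mem_filter => /orP[/s1J|/andP[_ /s2J]].
- by move=> j; apply: measurableI; case: ifP.
- apply/seteqP; split => t /=.
  + by move=> [h1 h2] j _ /=; split; case: ifP => // jJ; [exact: h1|exact: h2].
  + move=> h; split => j js.
    * by have [] := h j; [rewrite /= mem_cat js|rewrite /= js].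
    * have js' : j \in s1 ++ [seq j <- s2 | j \notin s1].
        by rewrite mem_cat mem_filter js andbT orbN.
      by have [] := h j js'; rewrite /= js.
Qed.

Lemma cylinders_indep J1 J2 (dJ : forall j, J1 j -> J2 j -> False) E1 E2 :
  cylinders J1 E1 -> cylinders J2 E2 -> prob P (E1 `&` E2) = prob P E1 * prob P E2.
Proof.
move=> [s1 [B1 [u1 s1J m1 ->]]] [s2 [B2 [u2 s2J m2 ->]]].
have ns j : j \in s2 -> j \notin s1.
  by move=> j2; apply/negP => j1; apply: (dJ j); [apply: s1J|apply: s2J].
pose B j := if j \in s1 then B1 j else B2 j.
have -> : \bigcap_(j in [set` s1]) (Z j @^-1` B1 j) `&`
          \bigcap_(j in [set` s2]) (Z j @^-1` B2 j) =
          \bigcap_(j in [set` s1 ++ s2]) (Z j @^-1` B j).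
  apply/seteqP; split => t /=.
  - move=> [h1 h2] j; rewrite /= mem_cat /B => /orP[js|js].
    + by rewrite js; apply: h1.
    + by rewrite (negbTE (ns _ js)); apply: h2.
  - move=> h; split => j js.
    + by have := h j; rewrite /= mem_cat js /B js; apply.
    + by have := h j; rewrite /= mem_cat js orbT /B (negbTE (ns _ js)); apply.
rewrite Z_indep; last by move=> j; rewrite /B; case: ifP.
  rewrite (Z_indep u1 m1) (Z_indep u2 m2) big_cat /=; congr (_ * _).
  - by apply: eq_big_seq => j; rewrite /B => ->.
  - by apply: eq_big_seq => j /ns /negbTE; rewrite /B => ->.
by rewrite cat_uniq u1 u2 andbT /=; apply/hasPn => j /ns.
Qed.

Lemma measurable_cylinder_sigma J E : cylinder_sigma J E -> measurable E.
Proof.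
apply: smallest_sub; first exact: sigma_algebra_measurable.
by move=> A /measurable_cylinder.
Qed.

Lemma cylinder_sigma_indep J1 J2 (dJ : forall j, J1 j -> J2 j -> False) E1 E2 :
  cylinder_sigma J1 E1 -> cylinder_sigma J2 E2 -> (P (E1 `&` E2) = P E1 * P E2)%E.
Proof.
have indep_cyl2 F2 : cylinders J2 F2 ->
    forall F1, cylinder_sigma J1 F1 -> (P (F1 `&` F2) = P F1 * P F2)%E.
  move=> cF2; have mF2 := measurable_cylinder cF2.
  apply: (dynkin_indep (@setI_closed_cylinders J1) mF2) => E cE.
  have mE := measurable_cylinder cE.
  split => //; rewrite !probE //; last exact: measurableI.
  by rewrite (cylinders_indep dJ cE cF2).
move=> sE1 sE2; rewrite setIC muleC.
apply: (dynkin_indep (@setI_closed_cylinders J2) (measurable_cylinder_sigma sE1)) sE2.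
move=> E cE; split; first exact: measurable_cylinder cE.
by rewrite setIC indep_cyl2 // muleC.
Qed.

Definition cylinder_space (J : set I) := g_sigma_algebraType (cylinders J).

Lemma measurable_coord J i : J i -> measurable_fun setT (Z i : cylinder_space J -> R).
Proof.
move=> Ji _ B mB; rewrite setTI; apply: sub_sigma_algebra.
exists [:: i], (fun j => if j == i then B else setT); split => //.
- by move=> j; rewrite inE => /eqP ->.
- by move=> j; case: ifP.
- apply/seteqP; split => t /=.
  + by move=> Bt j; rewrite /= inE => /eqP ->; rewrite eqxx.
  + by move=> h; have := h i; rewrite /= inE !eqxx; apply.
Qed.

Lemma measurable_cylinder_space J (f : cylinder_space J -> R) :
  measurable_fun setT f -> measurable_fun setT (f : T -> R).
Proof.
by move=> mf _ B mB; apply: measurable_cylinder_sigma; exact: (mf measurableT B mB).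
Qed.

Lemma cylinder_sigma_preimage J (f : cylinder_space J -> R) B :
  measurable_fun setT f -> measurable B -> cylinder_sigma J (f @^-1` B).
Proof. by move=> mf mB; have := mf measurableT B mB; rewrite setTI. Qed.

Lemma cylinder_sigma_gt J (f : cylinder_space J -> R) (c : R) :
  measurable_fun setT f -> cylinder_sigma J [set t | c < f t].
Proof.
move=> mf; have := cylinder_sigma_preimage mf (measurable_itv `]c, +oo[).
by congr (cylinder_sigma J); apply/seteqP; split => t /=; rewrite in_itv /= andbT.
Qed.

Lemma measurable_cylinder_gt J (f : cylinder_space J -> R) (c : R) :
  measurable_fun setT f -> measurable [set t | c < (f : T -> R) t].
Proof. by move=> mf; apply: measurable_fun_gt; exact: measurable_cylinder_space. Qed.

Lemma prob_gt_indep J1 J2 (dJ : forall j, J1 j -> J2 j -> False)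
  (f : cylinder_space J1 -> R) (g : cylinder_space J2 -> R) (c1 c2 : R) :
  measurable_fun setT f -> measurable_fun setT g ->
  prob P ([set t | c1 < f t] `&` [set t | c2 < g t]) =
  prob P [set t | c1 < f t] * prob P [set t | c2 < g t].
Proof.
move=> mf mg; have mf1 := measurable_cylinder_gt c1 mf.
have mg2 := measurable_cylinder_gt c2 mg.
apply/EFin_inj; rewrite EFinM -!probE //; last exact: measurableI.
exact: (cylinder_sigma_indep dJ (cylinder_sigma_gt c1 mf) (cylinder_sigma_gt c2 mg)).
Qed.

Local Open Scope ereal_scope.

Definition law_of (f : T -> R) (mf : measurable_fun setT f) : probability R R :=
  distribution P (mfun_Sub (mem_set mf : f \in mfun)).

Lemma law_ofE (f : T -> R) (mf : measurable_fun setT f) A :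
  law_of mf A = P (f @^-1` A).
Proof. by []. Qed.

Section IndependentSum.
Variables (J1 J2 : set I).
Hypothesis dJ : forall j, J1 j -> J2 j -> False.
Variables (f : cylinder_space J1 -> R) (g : cylinder_space J2 -> R).
Hypotheses (mf : measurable_fun setT f) (mg : measurable_fun setT g).

Lemma product_law_sum_gt (m1 m2 : probability R R) :
  (forall A, measurable A -> m1 A = P (f @^-1` A)) ->
  (forall A, measurable A -> m2 A = P (g @^-1` A)) ->
  forall w : R,
  (m1 \x m2) [set p : R * R | (w < p.1 + p.2)%R] = P [set t | (w < f t + g t)%R].
Proof.
move=> m1E m2E w.
have mfg : measurable_fun setT (fun t : T => (f t, g t)).
  by apply: measurable_fun_pair; exact: measurable_cylinder_space.
pose joint := distribution P (mfun_Sub (mem_set mfg : _ \in mfun)).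
have joint_prod A B : measurable A -> measurable B ->
    joint (A `*` B) = m1 A * m2 B.
  move=> mA mB; rewrite m1E // m2E //.
  exact: (cylinder_sigma_indep dJ (cylinder_sigma_preimage mf mA)
                                  (cylinder_sigma_preimage mg mB)).
by rewrite (product_measure_unique joint_prod (measurable_sum_gt w)).
Qed.

Lemma prob_sum_gt_integral (w : R) :
  P [set t | (w < f t + g t)%R] =
  \int[law_of (measurable_cylinder_space mf)]_x P [set t | (w < x + g t)%R].
Proof.
have mg' := measurable_cylinder_space mg.
rewrite -(product_law_sum_gt (m1 := law_of (measurable_cylinder_space mf))
  (m2 := law_of mg')) //.
apply: eq_integral => x _ /=; rewrite law_ofE; congr (P _).
by apply/seteqP; split => t /=; rewrite /xsection /= inE.
Qed.

End IndependentSum.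

Lemma measurable_shift_prob (g : T -> R) (mg : measurable_fun setT g) (w : R) :
  measurable_fun setT (fun x : R => P [set t | (w < x + g t)%R]).
Proof.
apply: (eq_measurable_fun _ _ (measurable_fun_xsection (law_of mg) (measurable_sum_gt w))).
move=> x _ /=; rewrite law_ofE; congr (P _).
by apply/seteqP; split => t /=; rewrite /xsection /= inE.
Qed.

Lemma prob_gt_integral_indic (f : T -> R) (mf : measurable_fun setT f) (c : R) :
  P [set t | (c < f t)%R] =
  \int[law_of mf]_x (\1_(`]c, +oo[%classic : set R) x)%:E.
Proof.
have mc : measurable (`]c, +oo[%classic : set R) by exact: measurable_itv.
rewrite integral_indic // setIT.
transitivity (P (f @^-1` `]c, +oo[)); last by [].
by congr (P _); apply/seteqP; split => t /=; rewrite in_itv /= andbT.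
Qed.

(* Conditioning on [f]: a tail comparison between [g1] and [g2] beyond [y0]
   transfers to [f + g1] and [f + g2], up to the event [f > w - y0]. *)
Lemma tail_sum_le J1 J2 J3 (d12 : forall j, J1 j -> J2 j -> False)
  (d13 : forall j, J1 j -> J3 j -> False)
  (f : cylinder_space J1 -> R) (g1 : cylinder_space J2 -> R)
  (g2 : cylinder_space J3 -> R) (eps y0 : R) :
  measurable_fun setT f -> measurable_fun setT g1 -> measurable_fun setT g2 ->
  (0 <= eps)%R ->
  (forall y, (y0 <= y)%R ->
     P [set t | (y < g1 t)%R] <= eps%:E * P [set t | (y < g2 t)%R]) ->
  forall w : R,
  P [set t | (w < f t + g1 t)%R] <=
  eps%:E * P [set t | (w < f t + g2 t)%R] + P [set t | (w - y0 < f t)%R].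
Proof.
move=> mf mg1 mg2 eps0 g12 w.
have mf' := measurable_cylinder_space mf.
have mp1 := measurable_shift_prob (measurable_cylinder_space mg1) w.
have mp2 := measurable_shift_prob (measurable_cylinder_space mg2) w.
have mI : measurable_fun setT
    (fun x => (\1_(`](w - y0)%R, +oo[%classic : set R) x)%:E : \bar R).
  by apply/measurable_EFinP; apply: measurable_indic; exact: measurable_itv.
have pointwise x : P [set t | (w < x + g1 t)%R] <=
    eps%:E * P [set t | (w < x + g2 t)%R] +
    (\1_(`](w - y0)%R, +oo[%classic : set R) x)%:E.
  have shiftE (g : T -> R) : [set t | (w < x + g t)%R] = [set t | (w - x < g t)%R].
    by apply/seteqP; split => t /=; rewrite ltrBlDl.
  have [wx|wx] := leP y0 (w - x)%R.
  - by rewrite !shiftE; apply: (le_trans (g12 _ wx)); rewrite leeDl // lee_fin.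
  - rewrite indicE; have -> : x \in (`](w - y0)%R, +oo[%classic : set R).
      by rewrite inE /= in_itv /= andbT ltrBlDr -ltrBlDl.
    rewrite addeC; apply: (le_trans (probability_le1 P _)).
      by rewrite shiftE; apply: measurable_fun_gt; exact: measurable_cylinder_space.
    by rewrite leeDl // mule_ge0 // ?lee_fin // measure_ge0.
rewrite (prob_sum_gt_integral d12 mf mg1) (prob_sum_gt_integral d13 mf mg2).
rewrite (prob_gt_integral_indic mf') -ge0_integralZl // -ge0_integralD //; last 2 first.
- by move=> x _; apply: mule_ge0; [rewrite lee_fin|exact: measure_ge0].
- by apply: emeasurable_funM => //; exact: measurable_cst.
apply: ge0_le_integral => //.
by apply: emeasurable_funD => //; apply: emeasurable_funM => //; exact: measurable_cst.
Qed.

End Independence.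

Section SmallAtInfinity.
Context (R : realType).

Definition small_at_infty (f g : R -> R) :=
  forall eps, 0 < eps -> exists M, forall u, M <= u -> f u <= eps * g u.

Lemma ratio_cvg0_small (f g : R -> R) : (f u / g u) @[u --> +oo] --> 0 ->
  (forall u, 0 < u -> 0 < g u) -> small_at_infty f g.
Proof.
move=> /cvgr0Pnorm_le fg0 g_gt0 eps eps0.
have [M [_ HM]] := fg0 eps eps0.
exists (`|M| + 1) => u Mu.
have Mu' : M < u by apply: (le_lt_trans (ler_norm M)); apply: (lt_le_trans _ Mu); rewrite ltrDl.
have u0 : 0 < u by apply: (lt_le_trans _ Mu); rewrite ltr_pwDr.
by rewrite -ler_pdivrMr ?g_gt0 //; apply: le_trans (HM u Mu'); exact: ler_norm.
Qed.

Lemma small_ratio_cvg0 (f g : R -> R) : (forall u, 0 <= f u) -> (forall u, 0 <= g u) ->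
  small_at_infty f g -> (f u / g u) @[u --> +oo] --> 0.
Proof.
move=> f0 g0 fg; apply/cvgr0Pnorm_le => eps eps0.
have [M HM] := fg eps eps0.
exists M; split; first by rewrite num_real.
move=> u Mu; rewrite ger0_norm ?divr_ge0 //.
have [->|gn0] := eqVneq (g u) 0; first by rewrite invr0 mulr0 ltW.
by rewrite ler_pdivrMr ?lt_neqAle ?g0 1?eq_sym ?gn0 //; apply/HM/ltW.
Qed.

End SmallAtInfinity.

Definition idx_S (j : nat) : set (option nat) :=
  [set o | exists2 i, (i < j)%N & o = Some i].

Definition idx_YS (j : nat) : set (option nat) := [set o | o = None \/ idx_S j o].

Definition idx_XX (j : nat) : set (option nat) := [set o | o = Some j \/ o = Some j.+1].

Lemma idx_YS_X j o : idx_YS j o -> [set Some j] o -> False.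
Proof. by move=> [->|[i ij ->]] // [ij']; move: ij; rewrite ij' ltnn. Qed.

Lemma idx_YS_XX j o : idx_YS j o -> idx_XX j o -> False.
Proof.
move=> [->|[i ij ->]]; first by case.
by case => -[ij']; move: ij; rewrite ij' ?ltnn // ltnNge leqnSn.
Qed.

Lemma idx_S_Y j o : idx_S j o -> [set None] o -> False.
Proof. by move=> [i _ ->]. Qed.

Lemma idx_X_XS j o : [set Some j] o -> [set Some j.+1] o -> False.
Proof. by move=> -> [/eqP]; rewrite -[j.+1]addn1 -{1}[j]addn0 eqn_add2l. Qed.

Section Tails.
Context d (T : measurableType d) (R : realType) (P : probability T R).
Variables (X : nat -> {RV P >-> R}) (Y : {RV P >-> R}).
Hypothesis X_id : forall (i : nat) (B : set R), measurable B ->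
  P (X i @^-1` B) = P (X 0%N @^-1` B).
Hypothesis YX_indep : mutually_independent P (join_family Y (fun i => X i : T -> R)).

Let Z := join_family Y (fun i => X i : T -> R).
Let mZ : forall i, measurable_fun setT (Z i).
Proof. by case => [i|] /=; exact: measurable_funPT. Qed.

Let S j : T -> R := partial_sum (fun i => X i : T -> R) j.
Let tailYS j w := prob P [set t | w < Y t + S j t].
Let tailX c := prob P [set t | c < X 0%N t].
Let tailX2 y := tail_sum2 P (X 0%N) y.

Let measurable_X_cyl J j : J (Some j) ->
  measurable_fun setT ((X j : T -> R) : cylinder_space Z J -> R).
Proof. exact: measurable_coord. Qed.

Let measurable_S_cyl J j : (forall i, (i < j)%N -> J (Some i)) ->
  measurable_fun setT (S j : cylinder_space Z J -> R).
Proof.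
move=> Jj; apply: measurable_sum => i; apply: measurable_X_cyl; exact: Jj.
Qed.

Let measurable_YS_cyl j :
  measurable_fun setT ((fun t => Y t + S j t) : cylinder_space Z (idx_YS j) -> R).
Proof.
apply: measurable_funD; first by apply: (measurable_coord (Z := Z) (i := None)); left.
by apply: measurable_S_cyl => i ij; right; exists i.
Qed.

Let measurable_XX_cyl j :
  measurable_fun setT ((fun t => X j t + X j.+1 t) : cylinder_space Z (idx_XX j) -> R).
Proof. by apply: measurable_funD; apply: measurable_X_cyl; [left|right]. Qed.

Let measurable_S j : measurable_fun setT (S j).
Proof. by apply: measurable_sum => i; exact: measurable_funPT. Qed.

Let measurable_YS j : measurable_fun setT (fun t => Y t + S j t).
Proof. by apply: measurable_funD => //; exact: measurable_funPT. Qed.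

Lemma tailX_id j c : prob P [set t | c < X j t] = tailX c.
Proof.
have gtE (V : T -> R) : [set t | c < V t] = V @^-1` `]c, +oo[.
  by apply/seteqP; split => t /=; rewrite in_itv /= andbT.
by rewrite /tailX /prob !gtE X_id //; exact: measurable_itv.
Qed.

Lemma tailX2_id j y : prob P [set t | y < X j t + X j.+1 t] = tailX2 y.
Proof.
have lawE i A : measurable A -> law P (X 0%N) A = P (X i @^-1` A).
  by move=> mA; rewrite X_id.
by rewrite /tailX2 /tail_sum2 (product_law_sum_gt mZ YX_indep (@idx_X_XS j)
  (measurable_X_cyl (J := [set Some j]) erefl)
  (measurable_X_cyl (J := [set Some j.+1]) erefl) (lawE j) (lawE j.+1)).
Qed.

Lemma le_tailYS j w1 w2 : w1 <= w2 -> tailYS j w2 <= tailYS j w1.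
Proof.
move=> w12; apply: le_prob; try exact: measurable_fun_gt.
by move=> t /=; apply: le_lt_trans.
Qed.

Lemma tailYS0 w : tailYS 0 w = prob P [set t | w < Y t].
Proof.
by rewrite /tailYS; congr (prob P _); apply/seteqP; split => t /=;
  rewrite /S partial_sum0 addr0.
Qed.

(* The events [Y + S_j > w - c] and [X j > c] are independent and together
   force [Y + S_(j+1) > w]. *)
Lemma tailYS_shift j w c : tailYS j (w - c) * tailX c <= tailYS j.+1 w.
Proof.
rewrite -(tailX_id j) -(prob_gt_indep mZ YX_indep (@idx_YS_X j) _ _
  (@measurable_YS_cyl j) (measurable_X_cyl (J := [set Some j]) erefl)).
apply: le_prob; try exact: measurable_fun_gt.
- by apply: measurableI; apply: measurable_fun_gt => //; exact: measurable_funPT.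
- move=> t /= [h1 h2]; rewrite /S partial_sumS addrA.
  by rewrite -(subrK c w) ltrD.
Qed.

Lemma tailX2_gt0 : (forall c, 0 < c -> 0 < tailX c) -> forall u, 0 < u -> 0 < tailX2 u.
Proof.
move=> tailX_gt0 u u0; rewrite -(tailX2_id 0).
have mX0 := measurable_X_cyl (J := [set Some 0%N]) erefl.
have mX1 := measurable_X_cyl (J := [set Some 1%N]) erefl.
apply: (@lt_le_trans _ _
  (prob P ([set t | u / 2 < X 0%N t] `&` [set t | u / 2 < X 1%N t]))).
  rewrite (prob_gt_indep mZ YX_indep (@idx_X_XS 0) _ _ mX0 mX1) !tailX_id.
  by apply: mulr_gt0; apply: tailX_gt0; exact: divr_gt0.
apply: le_prob.
- by apply: measurableI; apply: measurable_fun_gt; exact: measurable_funPT.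
- by apply: measurable_fun_gt; apply: measurable_funD; exact: measurable_funPT.
- by move=> t /= [h0 h1]; rewrite [u]splitr; exact: ltrD.
Qed.

Lemma tailYS_split eps v : 0 <= eps ->
  (forall y, v <= y -> tailX y <= eps * tailX2 y) ->
  forall j w, tailYS j.+1 w <= eps * tailYS j.+2 w + tailYS j (w - v).
Proof.
move=> eps0 tailX_le j w.
have mXj := measurable_X_cyl (J := [set Some j]) erefl.
have XX_le y : v <= y -> (P [set t | (y < X j t)%R] <=
    eps%:E * P [set t | (y < X j t + X j.+1 t)%R])%E.
  move=> vy; rewrite !probE; last 2 first.
  - by apply: measurable_fun_gt; apply: measurable_funD; exact: measurable_funPT.
  - by apply: measurable_fun_gt; exact: measurable_funPT.
  by rewrite -EFinM lee_fin tailX_id tailX2_id; exact: tailX_le.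
have := tail_sum_le mZ YX_indep (@idx_YS_X j) (@idx_YS_XX j) (@measurable_YS_cyl j)
  mXj (@measurable_XX_cyl j) eps0 XX_le w.
have sumE (k : nat) (g : T -> R) : (forall t, S k t = S j t + g t) ->
    [set t | w < Y t + S j t + g t] = [set t | w < Y t + S k t].
  by move=> Sk; apply/seteqP; split => t /=; rewrite Sk addrA.
rewrite (sumE j.+1) => [|t]; last by rewrite /S partial_sumS.
rewrite (sumE j.+2) => [|t]; last by rewrite /S !partial_sumS addrA.
rewrite !probE; try exact: measurable_fun_gt.
by rewrite -EFinM -EFinD lee_fin.
Qed.

Lemma tailYS_shift_le j w c c' : c <= c' -> tailYS j (w - c) * tailX c' <= tailYS j.+1 w.
Proof.
move=> cc'; apply: le_trans (tailYS_shift j w c').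
by apply: ler_wpM2r; [exact: prob_ge0|apply: le_tailYS; rewrite lerB].
Qed.

Section BoundedCase.
Variables (A alpha a : R).
Hypothesis X_bounded : light_tail_ii P (X 0%N) A alpha.
Hypothesis a_le_alpha : a <= alpha.
Hypothesis Y_condP : condP P Y a.

Lemma partial_sum_gt_null k : (P [set t | (k%:R * A < S k t)%R] = 0)%E.
Proof.
have [_ [_ [X0_null _]]] := X_bounded.
have Xj_null j : (P [set t | (A < X j t)%R] = 0)%E.
  rewrite probE; last by apply: measurable_fun_gt; exact: measurable_funPT.
  rewrite tailX_id /tailX (negligible_prob0 _ X0_null) //.
  by apply: measurable_fun_gt; exact: measurable_funPT.
elim: k => [|k IH].
  rewrite (_ : [set t | _] = set0) ?measure0 //.
  by apply/seteqP; split => t //=; rewrite /S partial_sum0 mul0r ltxx.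
apply/eqP; rewrite eq_le measure_ge0 andbT -(adde0 0%E) -{1}IH -(Xj_null k).
apply: le_trans (measureU2 _ _ _); last 2 first.
- exact: measurable_fun_gt.
- by apply: measurable_fun_gt; exact: measurable_funPT.
apply: le_measure; rewrite ?inE; first exact: measurable_fun_gt.
- by apply: measurableU; apply: measurable_fun_gt => //; exact: measurable_funPT.
- move=> t /=; rewrite /S partial_sumS -nat1r mulrDl mul1r => ASk.
  case: (ltP (k%:R * A) (S k t)) => SkA; [by left|right].
  by rewrite ltNge; apply/negP => XA; move: ASk; rewrite ltNge addrC lerD.
Qed.

(* [P(Y > y) <= P(Y > (y - alpha) + a) = o(P(Y > y - alpha))] by condition (P). *)
Lemma condP_small_shift :
  small_at_infty (fun y => prob P [set t | y < Y t]) (fun y => prob P [set t | y < Y t + alpha]).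
Proof.
have [_ [Y_gt0 Y_ratio]] := Y_condP.
move=> eps eps0; have [M HM] := ratio_cvg0_small Y_ratio Y_gt0 eps0.
have mY c : measurable [set t | c < Y t] by apply: measurable_fun_gt; exact: measurable_funPT.
exists (M + alpha) => y My.
apply: (@le_trans _ _ (prob P [set t | y - alpha + a < Y t])).
  apply: le_prob => // t /=; apply: le_lt_trans.
  by rewrite -addrA gerDl addrC subr_le0.
have -> : [set t | y < Y t + alpha] = [set t | y - alpha < Y t].
  by apply/seteqP; split => t /=; rewrite ltrBlDr.
by apply: HM; rewrite lerBrDr.
Qed.

Lemma bounded_case k : small_at_infty (tailYS k) (tailYS k.+1).
Proof.
have [_ [_ [_ tailX_alpha_gt0]]] := X_bounded.
move=> eps eps0; have epsF_gt0 : 0 < eps * tailX alpha by exact: mulr_gt0.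
have [M HM] := condP_small_shift epsF_gt0.
have mY := measurable_coord (Z := Z) (J := [set None]) (i := None) erefl.
have mYa : measurable_fun setT ((fun t => Y t + alpha) : cylinder_space Z [set None] -> R).
  by apply: measurable_funD => //; exact: measurable_cst.
have mS := @measurable_S_cyl (idx_S k) k (fun i ik => ex_intro2 _ _ i ik erefl).
have Y_le y : M <= y -> (P [set t | (y < Y t)%R] <=
    (eps * tailX alpha)%:E * P [set t | (y < Y t + alpha)%R])%E.
  move=> My; rewrite !probE ?EFinM -?EFinM ?lee_fin; first exact: HM.
  - by apply: measurable_fun_gt; apply: measurable_funD => //; exact: measurable_funPT.
  - by apply: measurable_fun_gt; exact: measurable_funPT.
exists (M + k%:R * A) => u Mu.
have S_null : prob P [set t | u - M < S k t] = 0.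
  apply/eqP; rewrite eq_le prob_ge0 andbT.
  have <- : prob P [set t | k%:R * A < S k t] = 0.
    by apply/EFin_inj; rewrite -probE ?partial_sum_gt_null //; exact: measurable_fun_gt.
  apply: le_prob; try exact: measurable_fun_gt.
  by move=> t /= uS; apply: le_lt_trans uS; rewrite lerBrDl.
have := tail_sum_le mZ YX_indep (@idx_S_Y k) (@idx_S_Y k) mS mY mYa (ltW epsF_gt0) Y_le u.
have -> : [set t | u < S k t + Y t] = [set t | u < Y t + S k t].
  by apply/seteqP; split => t /=; rewrite addrC.
have -> : [set t | u < S k t + (Y t + alpha)] = [set t | u - alpha < Y t + S k t].
  by apply/seteqP; split => t /=; rewrite ltrBlDr addrCA addrA.
rewrite !probE; try exact: measurable_fun_gt.
rewrite S_null addr0 -EFinM lee_fin => /le_trans; apply.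
by rewrite -mulrA ler_wpM2l ?(ltW eps0) // mulrC tailYS_shift.
Qed.

End BoundedCase.

Section LightCase.
Variable a : R.
Hypothesis X_light : light_tail_i (X 0%N).
Hypothesis Y_condP : condP P Y a.

Let tailX_gt0 c : 0 < c -> 0 < tailX c.
Proof. by case: X_light => X_gt0 _; exact: X_gt0. Qed.

Lemma light_tail_small : small_at_infty tailX tailX2.
Proof.
have [_ ratio] := X_light.
exact: ratio_cvg0_small ratio (tailX2_gt0 tailX_gt0).
Qed.

(* Two independent increments beyond [t = (|c| + a) / 2] carry [Y + S_0] past the
   shift [a] of condition (P). *)
Lemma tailY_shift_small c : small_at_infty (fun u => tailYS 0 (u - c)) (tailYS 2).
Proof.
have [a_gt0 [Y_gt0 Y_ratio]] := Y_condP.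
move=> eps eps0; pose t := (`|c| + a) / 2.
have t_gt0 : 0 < t by rewrite divr_gt0 // ltr_wpDl.
have F_gt0 := tailX_gt0 t_gt0.
have [M HM] := ratio_cvg0_small Y_ratio Y_gt0 (mulr_gt0 eps0 (mulr_gt0 F_gt0 F_gt0)).
exists (M + `|c| + a) => u Mu.
have two_steps : tailYS 0 (u - t - t) * (tailX t * tailX t) <= tailYS 2 u.
  rewrite mulrA; apply: le_trans (tailYS_shift 1 u t).
  by apply: ler_wpM2r; [exact: prob_ge0|exact: tailYS_shift].
apply: le_trans (_ : eps * (tailX t * tailX t) * tailYS 0 (u - t - t) <= _); last first.
  by rewrite -mulrA ler_wpM2l ?(ltW eps0) // mulrC.
apply: le_trans (le_tailYS 0 (_ : u - `|c| <= u - c)) _; first by rewrite lerB // ler_norm.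
have -> : u - t - t = u - `|c| - a by rewrite /t; lra.
rewrite !tailYS0 -[X in prob P [set _ | X < _]](subrK a); apply: HM.
lra.
Qed.

Lemma tailYS_shift_small_step j :
  (forall c, small_at_infty (fun u => tailYS j (u - c)) (tailYS j.+2)) ->
  forall c, small_at_infty (fun u => tailYS j.+1 (u - c)) (tailYS j.+3).
Proof.
move=> IH c eps eps0; pose c' := `|c| + 1.
have c'_gt0 : 0 < c' by rewrite ltr_wpDl.
have e_gt0 : 0 < eps / 2 * tailX c' by rewrite mulr_gt0 ?divr_gt0 ?tailX_gt0.
have [v Hv] := light_tail_small e_gt0.
have [M HM] := IH (c + v) _ e_gt0.
exists M => u Mu.
have shift_le w : w <= c' ->
    eps / 2 * tailX c' * tailYS j.+2 (u - w) <= eps / 2 * tailYS j.+3 u.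
  move=> wc'; rewrite -mulrA ler_wpM2l ?divr_ge0 ?(ltW eps0) // mulrC.
  exact: tailYS_shift_le.
have := tailYS_split (ltW e_gt0) Hv j (u - c).
have := HM u Mu; rewrite opprD addrA.
have := shift_le c; have := shift_le 0; rewrite subr0.
have := ler_norm c; have := ltW c'_gt0; rewrite /c'; lra.
Qed.

Lemma tailYS_shift_small j c :
  small_at_infty (fun u => tailYS j (u - c)) (tailYS j.+2).
Proof.
elim: j c => [|j IH] c; [exact: tailY_shift_small|exact: tailYS_shift_small_step].
Qed.

Lemma light_case k : (0 < k)%N -> small_at_infty (tailYS k) (tailYS k.+1).
Proof.
case: k => [//|j] _ eps eps0.
have e_gt0 : 0 < eps / 2 by exact: divr_gt0.
have [v Hv] := light_tail_small e_gt0.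
have [M HM] := tailYS_shift_small j v e_gt0.
exists M => u Mu.
have := tailYS_split (ltW e_gt0) Hv j u; have := HM u Mu; lra.
Qed.

End LightCase.
End Tails.

Theorem lemma2 (d : measure_display) (T : measurableType d) (R : realType)
  (P : probability T R) (X : nat -> {RV P >-> R}) (Y : {RV P >-> R}) (a : R) :
  (forall (i : nat) (B : set R), measurable B ->
     P (X i @^-1` B) = P (X 0%N @^-1` B)) ->
  mutually_independent P (join_family Y (fun i => X i : T -> R)) ->
  (light_tail_i (X 0%N) \/
   exists A alpha : R, light_tail_ii P (X 0%N) A alpha /\ a <= alpha) ->
  condP P Y a ->
  forall k : nat, (0 < k)%N ->
    (prob P [set t | u < Y t + partial_sum (fun i => X i : T -> R) k t] /
     prob P [set t | u < Y t + partial_sum (fun i => X i : T -> R) k.+1 t])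
      @[u --> +oo] --> 0.
Proof.
move=> X_id YX_indep [X_light|[A [alpha [X_bounded a_le_alpha]]]] Y_condP k k_gt0;
  apply: small_ratio_cvg0 => [u|u|]; try exact: prob_ge0.
- exact: (light_case X_id YX_indep X_light Y_condP k_gt0).
- exact: (bounded_case X_id YX_indep X_bounded a_le_alpha Y_condP k).
Qed.
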